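(* The variety $\mathbf{K}_2$ is not locally finite; in fact its free algebra on one generator is infinite.
   Context: A pseudocomplemented de Morgan algebra is $(L;\wedge,\vee,{}^\ast,{}^\prime,0,1)$ with bounded distributive lattice reduct, pseudocomplement ${}^\ast$ and de Morgan involution ${}^\prime$. With $x^{0(\prime\ast)}=x$, $x^{(k+1)(\prime\ast)}=((x^{k(\prime\ast)})')^\ast$, $\mathbf{K}_2$ is the variety of such algebras satisfying $x\wedge x^{\prime\ast\prime}\le y\vee y^\ast$ (regularity), $x\wedge x'\le y\vee y'$ (Kleene), and $(x\wedge x^{\prime\ast})^{2(\prime\ast)}=(x\wedge x^{\prime\ast})^{3(\prime\ast)}$ (range $2$). *)

From Stdlib Require Import Arith.

Record PDMStruct := {
  car   : Type;
  meet  : car -> car -> car;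
  join  : car -> car -> car;
  star  : car -> car;
  prim  : car -> car;
  bot   : car;
  top   : car
}.

Definition le (A : PDMStruct) (x y : car A) : Prop := meet A x y = x.

Definition is_bdl (A : PDMStruct) : Prop :=
  (forall x y z, meet A x (meet A y z) = meet A (meet A x y) z) /\
  (forall x y z, join A x (join A y z) = join A (join A x y) z) /\
  (forall x y, meet A x y = meet A y x) /\
  (forall x y, join A x y = join A y x) /\
  (forall x y, meet A x (join A x y) = x) /\
  (forall x y, join A x (meet A x y) = x) /\
  (forall x y z, meet A x (join A y z) = join A (meet A x y) (meet A x z)) /\
  (forall x, join A x (bot A) = x) /\
  (forall x, meet A x (top A) = x).

Definition is_pseudocomplement (A : PDMStruct) : Prop :=
  forall x y, meet A x y = bot A <-> le A y (star A x).

Definition is_demorgan (A : PDMStruct) : Prop :=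
  (forall x, prim A (prim A x) = x) /\
  (forall x y, prim A (join A x y) = meet A (prim A x) (prim A y)) /\
  (forall x y, prim A (meet A x y) = join A (prim A x) (prim A y)).

Definition is_PDM (A : PDMStruct) : Prop :=
  is_bdl A /\ is_pseudocomplement A /\ is_demorgan A.

(* x^{k('* )}: x^{0('* )} = x, x^{(k+1)('* )} = ((x^{k('* )})')^* *)
Fixpoint iter_ps (A : PDMStruct) (k : nat) (x : car A) : car A :=
  match k with
  | O => x
  | S k' => star A (prim A (iter_ps A k' x))
  end.

Definition in_K2 (A : PDMStruct) : Prop :=
  is_PDM A /\
  (forall x y, le A (meet A x (prim A (star A (prim A x)))) (join A y (star A y))) /\
  (forall x y, le A (meet A x (prim A x)) (join A y (prim A y))) /\
  (forall x, iter_ps A 2 (meet A x (star A (prim A x)))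
             = iter_ps A 3 (meet A x (star A (prim A x)))).

Inductive term1 : Type :=
  | tVar  : term1
  | tBot  : term1
  | tTop  : term1
  | tMeet : term1 -> term1 -> term1
  | tJoin : term1 -> term1 -> term1
  | tStar : term1 -> term1
  | tPrim : term1 -> term1.

Fixpoint eval (A : PDMStruct) (a : car A) (t : term1) : car A :=
  match t with
  | tVar => a
  | tBot => bot A
  | tTop => top A
  | tMeet t1 t2 => meet A (eval A a t1) (eval A a t2)
  | tJoin t1 t2 => join A (eval A a t1) (eval A a t2)
  | tStar t1 => star A (eval A a t1)
  | tPrim t1 => prim A (eval A a t1)
  end.

(* Two unary terms are equal in the free K_2-algebra on one generator
   iff the identity t1 = t2 holds in every K_2-algebra. *)
Definition K2_equiv (t1 t2 : term1) : Prop :=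
  forall (A : PDMStruct), in_K2 A -> forall a : car A, eval A a t1 = eval A a t2.

(* Every reflexive symmetric graph (V, ~) yields a pseudocomplemented de Morgan
   algebra of pairs (X, Y) of vertex sets with Y contained in the interior
   int X = {j | all neighbours of j lie in X}: operations are componentwise
   except (X, Y)' = (~Y, ~X) and (X, Y)* = (~X, int ~X).  Such an algebra is
   always regular and Kleene, and if some vertex is adjacent to every vertex,
   int (int W) is the constant "W is everything", which forces range 2.
   Take the fan on nat (0 adjacent to all, i ~ i+1) and the generator ({2}, {}).
   On second components x'* acts as Y |-> int Y, and int shrinks the tail of
   [0,2] u [m,oo) by one, while joining with a term of value (N, [0,2]) puts the
   hub 0 back.  So t_{n+1} = t_n'* v (N, [0,2]) has second component
   [0,2] u [n+4,oo): infinitely many distinct unary terms. *)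

From Stdlib Require Import Lia Classical FunctionalExtensionality
  PropExtensionality ProofIrrelevance.

Record graph := Graph {
  vertex :> Type;
  adj : vertex -> vertex -> Prop;
  adj_refl : forall v, adj v v;
  adj_sym : forall u v, adj u v -> adj v u }.

Section NeighbourhoodAlgebra.

Context {G : graph}.

Definition interior (P : G -> Prop) (j : G) : Prop := forall i, adj G i j -> P i.

Lemma interior_iff (P Q : G -> Prop) :
  (forall i, P i <-> Q i) -> forall j, interior P j <-> interior Q j.
Proof. unfold interior; intros H j; split; intros Hj i Hi; apply H; auto. Qed.

Record ipair := IPair {
  outer : G -> Prop;
  inner : G -> Prop;
  inner_interior : forall j, inner j -> interior outer j }.

Lemma inner_outer (u : ipair) j : inner u j -> outer u j.
Proof. intro H; apply (inner_interior u j H), adj_refl. Qed.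

Lemma ipair_ext (u v : ipair) :
  (forall i, outer u i <-> outer v i) -> (forall j, inner u j <-> inner v j) -> u = v.
Proof.
  destruct u as [X Y HY], v as [X' Y' HY']; simpl; intros HX HYY.
  assert (X = X') as <-
    by (apply functional_extensionality; intro; apply propositional_extensionality; auto).
  assert (Y = Y') as <-
    by (apply functional_extensionality; intro; apply propositional_extensionality; auto).
  f_equal; apply proof_irrelevance.
Qed.

Lemma ipair_eq_iff (u v : ipair) :
  u = v -> (forall i, outer u i <-> outer v i) /\ (forall j, inner u j <-> inner v j).
Proof. intros ->; split; tauto. Qed.

Definition imeet (u v : ipair) : ipair.
Proof.
  refine (IPair (fun i => outer u i /\ outer v i) (fun j => inner u j /\ inner v j) _).
  intros j [Hu Hv] i Hi; split;
    [apply (inner_interior u j Hu) | apply (inner_interior v j Hv)]; auto.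
Defined.

Definition ijoin (u v : ipair) : ipair.
Proof.
  refine (IPair (fun i => outer u i \/ outer v i) (fun j => inner u j \/ inner v j) _).
  intros j [Hu | Hv] i Hi;
    [left; apply (inner_interior u j Hu) | right; apply (inner_interior v j Hv)]; auto.
Defined.

Definition istar (u : ipair) : ipair :=
  IPair (fun i => ~ outer u i) (interior (fun i => ~ outer u i)) (fun _ H => H).

Definition iprim (u : ipair) : ipair.
Proof.
  refine (IPair (fun i => ~ inner u i) (fun j => ~ outer u j) _).
  intros j Hj i Hi Hu; exact (Hj (inner_interior u i Hu j (adj_sym G i j Hi))).
Defined.

Definition ibot : ipair := IPair (fun _ => False) (fun _ => False) (fun _ H => False_ind _ H).
Definition itop : ipair := IPair (fun _ => True) (fun _ => True) (fun _ _ _ _ => I).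

Definition nb_algebra : PDMStruct :=
  {| car := ipair; meet := imeet; join := ijoin; star := istar; prim := iprim;
     bot := ibot; top := itop |}.

Lemma nb_algebra_pseudocomplement : is_pseudocomplement nb_algebra.
Proof.
  intros x y; unfold le; simpl; split; intro H;
    destruct (ipair_eq_iff _ _ H) as [Hout Hin]; simpl in *; apply ipair_ext; simpl.
  - intro i; specialize (Hout i); tauto.
  - intro j; split; [tauto |]. intro Hy; split; [exact Hy |].
    intros i Hi Hx; apply (Hout i); split; [exact Hx | exact (inner_interior y j Hy i Hi)].
  - intro i; specialize (Hout i); tauto.
  - intro j; split; [| tauto]. intros [Hx Hy].
    exact (proj2 (proj2 (Hout j) (inner_outer y j Hy)) (inner_outer x j Hx)).
Qed.

Lemma nb_algebra_PDM : is_PDM nb_algebra.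
Proof.
  split; [| split; [exact nb_algebra_pseudocomplement |]].
  - repeat split; intros; apply ipair_ext; simpl; intros; tauto.
  - repeat split; intros; apply ipair_ext; simpl; intros;
      solve [tauto | split; [apply NNPP | tauto]].
Qed.

Lemma nb_algebra_kleene (x y : ipair) :
  le nb_algebra (imeet x (iprim x)) (ijoin y (iprim y)).
Proof.
  unfold le; apply ipair_ext; simpl; intro k.
  - pose proof (@inner_outer y k); pose proof (classic (inner y k)); tauto.
  - pose proof (@inner_outer x k); tauto.
Qed.

Lemma nb_algebra_regular (x y : ipair) :
  le nb_algebra (imeet x (iprim (istar (iprim x)))) (ijoin y (istar y)).
Proof.
  unfold le; apply ipair_ext; simpl; intro k; [pose proof (classic (outer y k)) |]; tauto.
Qed.

Definition represents (u : ipair) (P Q : G -> Prop) : Prop :=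
  (forall i, outer u i <-> P i) /\ (forall j, inner u j <-> Q j).

Lemma represents_self (u : ipair) : represents u (outer u) (inner u).
Proof. split; tauto. Qed.

Lemma represents_iff {u : ipair} {P Q P' Q' : G -> Prop} :
  represents u P Q -> (forall i, P i <-> P' i) -> (forall j, Q j <-> Q' j) ->
  represents u P' Q'.
Proof. intros [HP HQ] HP' HQ'; split; intro; rewrite ?HP, ?HQ; auto. Qed.

Lemma represents_unique {u v : ipair} {P Q : G -> Prop} :
  represents u P Q -> represents v P Q -> u = v.
Proof. intros [H1 H2] [H3 H4]; apply ipair_ext; intro; rewrite ?H1, ?H2, ?H3, ?H4; tauto. Qed.

Lemma represents_meet {u v : ipair} {P Q P' Q' : G -> Prop} :
  represents u P Q -> represents v P' Q' ->
  represents (imeet u v) (fun i => P i /\ P' i) (fun j => Q j /\ Q' j).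
Proof. intros [H1 H2] [H3 H4]; split; intro; simpl; rewrite ?H1, ?H2, ?H3, ?H4; tauto. Qed.

Lemma represents_join {u v : ipair} {P Q P' Q' : G -> Prop} :
  represents u P Q -> represents v P' Q' ->
  represents (ijoin u v) (fun i => P i \/ P' i) (fun j => Q j \/ Q' j).
Proof. intros [H1 H2] [H3 H4]; split; intro; simpl; rewrite ?H1, ?H2, ?H3, ?H4; tauto. Qed.

Lemma represents_prim {u : ipair} {P Q : G -> Prop} :
  represents u P Q -> represents (iprim u) (fun i => ~ Q i) (fun j => ~ P j).
Proof. intros [H1 H2]; split; intro; simpl; rewrite ?H1, ?H2; tauto. Qed.

Lemma represents_star {u : ipair} {P Q : G -> Prop} :
  represents u P Q -> represents (istar u) (fun i => ~ P i) (interior (fun i => ~ P i)).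
Proof.
  intros [H1 _]; split; intro; simpl.
  - rewrite H1; tauto.
  - apply interior_iff; intro; rewrite H1; tauto.
Qed.

Lemma represents_star_prim {u : ipair} {P Q : G -> Prop} :
  represents u P Q -> represents (istar (iprim u)) Q (interior Q).
Proof.
  intro H; apply (represents_iff (represents_star (represents_prim H))).
  - intro; split; [apply NNPP | tauto].
  - apply interior_iff; intro; split; [apply NNPP | tauto].
Qed.

Section Hub.

Context {hub : G}.
Hypothesis adj_hub : forall j, adj G hub j.

Lemma interior_hub {P : G -> Prop} {j : G} : interior P j -> P hub.
Proof. intro H; apply H, adj_hub. Qed.

Lemma interior_at_hub {P : G -> Prop} : interior P hub -> forall k, P k.
Proof. intros H k; apply H, adj_sym, adj_hub. Qed.

Lemma interior_interior (P : G -> Prop) j : interior (interior P) j <-> forall k, P k.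
Proof.
  split.
  - intro H; exact (interior_at_hub (interior_hub H)).
  - intros H i _ k _; apply H.
Qed.

Lemma nb_algebra_range2 (x : ipair) :
  iter_ps nb_algebra 2 (imeet x (istar (iprim x)))
  = iter_ps nb_algebra 3 (imeet x (istar (iprim x))).
Proof.
  set (W := fun k => inner x k /\ interior (inner x) k).
  set (C := forall k, inner x k).
  assert (HW : forall j, interior W j <-> C).
  { intro j; split.
    - intro H; exact (interior_at_hub (proj2 (interior_hub H))).
    - intros H i _; split; [apply H | intros k _; apply H]. }
  assert (HWW : forall j, interior (interior W) j <-> C).
  { intro j; rewrite interior_interior; split.
    - intros H k; apply H.
    - intros H k; split; [apply H | intros i _; apply H]. }
  assert (Hu : represents (imeet x (istar (iprim x))) (fun i => outer x i /\ inner x i) W)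
    by exact (represents_meet (represents_self x) (represents_star_prim (represents_self x))).
  pose proof (represents_star_prim (represents_star_prim Hu)) as H2.
  pose proof (represents_star_prim H2) as H3.
  apply (represents_unique (P := fun _ => C) (Q := fun _ => C)).
  - exact (represents_iff H2 HW HWW).
  - apply (represents_iff H3 HWW); intro j; rewrite interior_interior; split.
    + intro H; apply (HW hub), H.
    + intros H k; apply HW, H.
Qed.

Lemma nb_algebra_K2 : in_K2 nb_algebra.
Proof.
  split; [exact nb_algebra_PDM |].
  split; [exact nb_algebra_regular |].
  split; [exact nb_algebra_kleene | exact nb_algebra_range2].
Qed.

End Hub.

End NeighbourhoodAlgebra.

Arguments interior : clear implicits.
Arguments ipair : clear implicits.
Arguments nb_algebra : clear implicits.

Definition fan (i j : nat) : Prop := i = 0 \/ j = 0 \/ i = j \/ i = S j \/ j = S i.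

Definition fan_graph : graph.
Proof. refine (Graph nat fan _ _); unfold fan; intros; lia. Defined.

Lemma fan_hub j : adj fan_graph 0 j.
Proof. simpl; unfold fan; lia. Qed.

Lemma fan_interior_S (P : nat -> Prop) j :
  interior fan_graph P (S j) <-> P 0 /\ P j /\ P (S j) /\ P (S (S j)).
Proof.
  unfold interior; simpl; unfold fan; split.
  - intro H; repeat split; apply H; lia.
  - intros (H0 & H1 & H2 & H3) i Hi.
    destruct Hi as [-> | [Hi | [-> | [-> | Hi]]]]; [| lia | | | injection Hi as <-]; auto.
Qed.

Lemma fan_interior_0 {P : nat -> Prop} : interior fan_graph P 0 -> forall k, P k.
Proof. exact (interior_at_hub (G := fan_graph) fan_hub). Qed.

Definition fan_algebra : PDMStruct := nb_algebra fan_graph.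

Definition generator : ipair fan_graph :=
  IPair (G := fan_graph) (fun i => i = 2) (fun _ => False) (fun _ H => False_ind _ H).

Local Notation ev t := (eval fan_algebra generator t).

Definition t_not2 : term1 := tStar tVar.
Definition t_ge4 : term1 := tStar (tPrim t_not2).
Definition t_not12 : term1 := tPrim (tStar t_ge4).
Definition t_not1 : term1 := tStar (tStar (tJoin tVar t_not12)).
Definition t_le2 : term1 := tPrim (tStar (tPrim t_not1)).

Fixpoint t_chain (n : nat) : term1 :=
  match n with
  | O => tJoin t_not2 t_le2
  | S m => tJoin (tStar (tPrim (t_chain m))) t_le2
  end.

Lemma represents_generator : represents (ev tVar) (fun i => i = 2) (fun _ => False).
Proof. split; simpl; tauto. Qed.

Lemma represents_not2 : represents (ev t_not2) (fun i => i <> 2) (fun j => 4 <= j).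
Proof.
  apply (represents_iff (represents_star represents_generator)); [tauto |].
  intros [| j]; [| rewrite fan_interior_S]; split; try lia.
  intro H; exfalso; apply (fan_interior_0 H 2); reflexivity.
Qed.

Lemma represents_ge4 : represents (ev t_ge4) (fun i => 4 <= i) (fun _ => False).
Proof.
  apply (represents_iff (represents_star (represents_prim represents_not2))); [lia |].
  intro j; split; [| tauto]. intro H; apply (H 0 (fan_hub j)); lia.
Qed.

Lemma represents_not12 :
  represents (ev t_not12) (fun i => i <> 1 /\ i <> 2) (fun j => 4 <= j).
Proof.
  apply (represents_iff (represents_prim (represents_star represents_ge4)));
    intro k; [| lia].
  destruct k as [| k]; [| rewrite fan_interior_S]; split; try lia.
  intros _ H; apply (fan_interior_0 H 4); lia.
Qed.

Lemma represents_not1 : represents (ev t_not1) (fun i => i <> 1) (fun j => 3 <= j).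
Proof.
  pose proof (represents_join represents_generator represents_not12) as Hj.
  assert (Hs : represents (istar (ev (tJoin tVar t_not12))) (fun i => i = 1) (fun _ => False)).
  { apply (represents_iff (represents_star Hj)); [lia |].
    intro j; split; [| tauto]. intro H; apply (H 0 (fan_hub j)); lia. }
  apply (represents_iff (represents_star Hs)); [tauto |].
  intros [| j]; [| rewrite fan_interior_S]; split; try lia.
  intro H; exfalso; apply (fan_interior_0 H 1); reflexivity.
Qed.

Lemma represents_le2 : represents (ev t_le2) (fun _ => True) (fun j => j <= 2).
Proof.
  apply (represents_iff (represents_prim (represents_star (represents_prim represents_not1)))).
  - intro i; split; [tauto |]. intros _ H; apply (H 0 (fan_hub i)); lia.
  - lia.
Qed.

Lemma represents_chain n :
  represents (ev (t_chain n)) (fun _ => True) (fun j => j <= 2 \/ n + 4 <= j).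
Proof.
  induction n as [| n IH].
  - apply (represents_iff (represents_join represents_not2 represents_le2)); intro; lia.
  - apply (represents_iff (represents_join (represents_star_prim IH) represents_le2));
      [tauto |].
    intros [| j]; [| rewrite fan_interior_S]; lia.
Qed.

Theorem theorem4p14 :
  exists f : nat -> term1, forall i j : nat, i <> j -> ~ K2_equiv (f i) (f j).
Proof.
  exists t_chain; intros i j Hij Heq.
  pose proof (Heq fan_algebra (nb_algebra_K2 (G := fan_graph) fan_hub) generator) as Hev.
  destruct (represents_chain i) as [_ Hi], (represents_chain j) as [_ Hj].
  assert (Hk : forall k, (k <= 2 \/ i + 4 <= k) <-> (k <= 2 \/ j + 4 <= k)).
  { intro k; rewrite <- Hi, <- Hj; simpl in Hev |- *; rewrite Hev; reflexivity. }
  pose proof (Hk (i + 4)); pose proof (Hk (j + 4)); lia.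
Qed.
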